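(* Let $\mu=(\mu_1,\dots,\mu_r)$ be a partition with $\mu_1\ge\cdots\ge\mu_r>0$. Then $\mu$ is both $2$-regular and a $4$-core if and only if exactly one of the following holds: (i) $\mu_r=1$ and there exists $0\le s\le r-1$ such that $\mu_i-\mu_{i+1}=3$ for all $1\le i\le s$ and $\mu_i-\mu_{i+1}=1$ for all $s+1\le i\le r-1$; (ii) $\mu_r\in\{2,3\}$ and $\mu_i-\mu_{i+1}=3$ for all $1\le i\le r-1$.
   Context: A partition is $2$-regular if no two nonzero parts are equal. A partition is a $4$-core if no hook length of its Young diagram is divisible by $4$. *)

(* Partitions as seq nat (parts listed in order, 0-indexed). *)
From mathcomp Require Import all_boot.
Set Implicit Arguments. Unset Strict Implicit. Unset Printing Implicit Defensive.

Definition is_partition (mu : seq nat) : bool :=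
  sorted geq mu && all (fun x => 0 < x) mu.

Definition two_regular (mu : seq nat) : bool :=
  uniq [seq x <- mu | x != 0].

Definition conj_part (mu : seq nat) (j : nat) : nat := count (fun x => j < x) mu.

(* hook length of cell (i,j) (0-indexed): arm + leg + 1 *)
Definition hook_length (mu : seq nat) (i j : nat) : nat :=
  (nth 0 mu i - j - 1) + (conj_part mu j - i - 1) + 1.

Definition four_core (mu : seq nat) : Prop :=
  forall i j, i < size mu -> j < nth 0 mu i -> ~~ (4 %| hook_length mu i j).

From mathcomp Require Import all_boot.
From mathcomp Require Import zify.
Set Implicit Arguments. Unset Strict Implicit. Unset Printing Implicit Defensive.

(* If row p is the last row of column j, the hook of the cell (i, j) has length
   (mu_i - mu_p) + (p - i) + (mu_p - j).  For distinct parts, a hook of length 4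
   arises in particular from a step mu_i - mu_(i+1) of at least 4, from a
   step 2 that is not the last part, or from a step 1 followed by a step of at
   least 2.  Excluding these leaves the steps 3, ..., 3, 1, ..., 1 ending in a
   part 1, or steps 3 ending in a part 2 or 3.  For those shapes every hook is
   4(p - i) plus a number in {1, 2, 3}, or odd. *)

Lemma nat_fun_steps (f : nat -> nat) (c a b : nat) :
  (forall i, a <= i -> i < b -> f i = f i.+1 + c) ->
  forall k, a <= k -> k <= b -> f k = f b + c * (b - k).
Proof.
move=> step.
suff shift d k : a <= k -> k + d <= b -> f k = f (k + d) + c * d.
  by move=> k ak kb; rewrite (shift (b - k)) ?subnKC.
elim: d k => [|d IH] k ak kdb; first by rewrite addn0 muln0 addn0.
rewrite step; [|lia|lia].
rewrite (IH k.+1) -?addSnnS; [lia|lia|lia].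
Qed.

Section Partition.
Variable mu : seq nat.
Hypothesis mu_partition : is_partition mu.
Local Notation m := (nth 0 mu).

Lemma part_ge_next k : m k.+1 <= m k.
Proof.
case/andP: mu_partition => sorted_mu _.
case: (ltnP k.+1 (size mu)) => [|k_big]; first exact: (sortedP 0 sorted_mu).
by rewrite nth_default.
Qed.

Lemma part_nonincreasing k p : k <= p -> m p <= m k.
Proof.
move/subnKC <-; elim: (p - k) => [|d IH]; first by rewrite addn0.
by rewrite addnS (leq_trans (part_ge_next _)).
Qed.

Lemma part_gt0 k : k < size mu -> 0 < m k.
Proof. by case/andP: mu_partition => _ /(all_nthP 0); apply. Qed.

Lemma part_gt0_size k : 0 < m k -> k < size mu.
Proof. by case: (ltnP k (size mu)) => // k_big; rewrite nth_default. Qed.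

Lemma part_gt_next k : sorted gtn mu -> k < size mu -> m k.+1 < m k.
Proof.
move=> strict_mu k_size; case: (ltnP k.+1 (size mu)) => [|k_last].
  exact: (sortedP 0 strict_mu).
by rewrite nth_default // part_gt0.
Qed.

Lemma two_regular_sorted_gtn : two_regular mu = sorted gtn mu.
Proof.
case/andP: mu_partition => sorted_mu pos_mu.
have /all_filterP nonzero_mu : all (fun x => x != 0) mu.
  by apply: sub_all pos_mu => x; rewrite lt0n.
by rewrite /two_regular nonzero_mu gtn_sorted_uniq_geq sorted_mu andbT.
Qed.

Lemma conj_part_row_end j p : j < m p -> m p.+1 <= j -> conj_part mu j = p.+1.
Proof.
move=> jp jp1; have p_size : p < size mu by apply: part_gt0_size; lia.
rewrite /conj_part -(cat_take_drop p.+1 mu) count_cat.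
have /eqP -> : count (fun x => j < x) (take p.+1 mu) == size (take p.+1 mu).
  rewrite -all_count.
  apply/(all_nthP 0) => k; rewrite size_takel // => kp.
  by rewrite nth_take // (leq_trans jp) ?part_nonincreasing.
have /eqP -> : count (fun x => j < x) (drop p.+1 mu) == 0.
  rewrite -leqn0 leqNgt -has_count; apply/(has_nthP 0) => -[k _].
  by rewrite nth_drop ltnNge (leq_trans (part_nonincreasing (leq_addr k p.+1))).
by rewrite size_takel // addn0.
Qed.

Lemma exists_row_end i j : j < m i -> exists p, [/\ i <= p, j < m p & m p.+1 <= j].
Proof.
move=> ji.
have bounded p : j < m p -> p <= size mu.
  by move/(leq_ltn_trans (leq0n j))/part_gt0_size/ltnW.
case: (ex_maxnP (ex_intro (fun p => j < m p) i ji) bounded) => p jp p_max.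
exists p; split=> //; first exact: p_max.
by rewrite leqNgt; apply/negP => /p_max; rewrite ltnn.
Qed.

Lemma hook_length_row_end i j p : i <= p -> j < m p -> m p.+1 <= j ->
  hook_length mu i j = (m i - m p) + (p - i) + (m p - j).
Proof.
move=> ip jp jp1; have := part_nonincreasing ip.
rewrite /hook_length (conj_part_row_end jp jp1); lia.
Qed.

Lemma four_coreP :
  four_core mu <-> forall i p j, i <= p -> j < m p -> m p.+1 <= j ->
    ~~ (4 %| (m i - m p) + (p - i) + (m p - j)).
Proof.
split=> [core i p j ip jp jp1 | hooks i j i_size ji].
  have ji : j < m i by apply: leq_trans jp (part_nonincreasing ip).
  by rewrite -hook_length_row_end // core // part_gt0_size //; lia.
have [p [ip jp jp1]] := exists_row_end ji.
by rewrite (hook_length_row_end ip jp jp1) hooks.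
Qed.

End Partition.

Lemma nth_last_succ (s : seq nat) : 0 < size s -> nth 0 s (size s).-1.+1 = 0.
Proof. by move=> s_gt0; rewrite prednK // nth_default. Qed.

Lemma four_ndvd_mul_add n t : 0 < t < 4 -> ~~ (4 %| 4 * n + t).
Proof. by case/andP=> t_gt0 t_lt4; rewrite dvdn_addr ?dvdn_mulr // gtnNdvd. Qed.

Lemma four_ndvd_odd n : ~~ (4 %| n.*2.+1).
Proof.
by apply/negP => /(dvdn_trans (isT : 2 %| 4)); rewrite dvdn2 /= odd_double.
Qed.

Definition shape_I (mu : seq nat) : Prop :=
  nth 0 mu (size mu).-1 = 1 /\
  exists s, s <= (size mu).-1 /\
    (forall i, i < s -> nth 0 mu i = nth 0 mu i.+1 + 3) /\
    (forall i, s <= i -> i < (size mu).-1 -> nth 0 mu i = nth 0 mu i.+1 + 1).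

Definition shape_II (mu : seq nat) : Prop :=
  (nth 0 mu (size mu).-1 = 2 \/ nth 0 mu (size mu).-1 = 3) /\
  (forall i, i < (size mu).-1 -> nth 0 mu i = nth 0 mu i.+1 + 3).

Lemma shape_I_not_II (mu : seq nat) : shape_I mu -> ~ shape_II mu.
Proof. by case=> last1 _ [[|]]; rewrite last1. Qed.

Section FromShape.
Variable mu : seq nat.
Hypothesis mu_partition : is_partition mu.
Hypothesis mu_nonempty : 0 < size mu.
Local Notation m := (nth 0 mu).
Local Notation r := (size mu).

(* Truncation makes the correction 2 * (s - k) vanish below row s; the formula
   also covers k = r, where both sides are 0. *)
Lemma shape_I_nth : shape_I mu ->
  exists s, forall k, k <= r -> m k = (r - k) + 2 * (s - k).
Proof.
case=> last1 [s [s_r1 [steps3 steps1]]]; exists s.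
have steps1_last i : s <= i -> i < r -> m i = m i.+1 + 1.
  move=> si ir; case: (ltnP i r.-1) => [|ir1]; first exact: steps1.
  have -> : i = r.-1 by lia.
  by rewrite last1 (nth_last_succ mu_nonempty).
have tail := nat_fun_steps steps1_last.
have head := nat_fun_steps (a := 0) (fun i _ => steps3 i).
move=> k kr; rewrite nth_default // in tail.
case: (leqP k s) => [ks | sk]; last by rewrite tail; lia.
by rewrite head // tail //; lia.
Qed.

Lemma shape_I_four_core : shape_I mu -> four_core mu.
Proof.
move/shape_I_nth=> [s nth_k]; apply/four_coreP => // i p j ip jp jp1.
have p_r : p < r by apply: part_gt0_size; lia.
have := nth_k i; have := nth_k p; have := nth_k p.+1.
case: (ltnP p s) => [ps | sp] m_p1 m_p m_i.
  rewrite (_ : _ + _ = 4 * (p - i) + (m p - j)); last by lia.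
  by apply: four_ndvd_mul_add; lia.
rewrite (_ : _ + _ = ((p - i) + (s - i)).*2.+1); last by lia.
exact: four_ndvd_odd.
Qed.

Lemma shape_II_four_core : shape_II mu -> four_core mu.
Proof.
case=> last23 steps3; apply/four_coreP => // i p j ip jp jp1.
have p_r : p < r by apply: part_gt0_size; lia.
have nth_k := nat_fun_steps (a := 0) (fun i _ => steps3 i).
have gap_p : m p <= m p.+1 + 3.
  case: (ltnP p r.-1) => [/steps3 -> // | p_last].
  have -> : p = r.-1 by lia.
  by rewrite (nth_last_succ mu_nonempty); lia.
rewrite (_ : _ + _ = 4 * (p - i) + (m p - j)); last first.
  by have := nth_k i; have := nth_k p; lia.
by apply: four_ndvd_mul_add; lia.
Qed.

Lemma shape_sorted_gtn : shape_I mu \/ shape_II mu -> sorted gtn mu.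
Proof.
move=> shape; apply/(sortedP 0) => k k_r /=; have k_r1 : k < r.-1 by lia.
case: shape => [[_ [s [_ [steps3 steps1]]]] | [_ steps3]].
  by case: (ltnP k s) => [/steps3 | /steps1/(_ k_r1)] ->; lia.
by rewrite (steps3 k) //; lia.
Qed.

End FromShape.

Section ToShape.
Variable mu : seq nat.
Hypothesis mu_partition : is_partition mu.
Hypothesis mu_strict : sorted gtn mu.
Hypothesis mu_core : four_core mu.
Local Notation m := (nth 0 mu).
Local Notation r := (size mu).

Let no_hook4 i p j : i <= p -> j < m p -> m p.+1 <= j ->
  (m i - m p) + (p - i) + (m p - j) <> 4.
Proof.
move=> ip jp jp1 hook4.
by have := proj1 (four_coreP mu_partition) mu_core i p j ip jp jp1; rewrite hook4.
Qed.

Lemma part_le_next_add3 i : m i <= m i.+1 + 3.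
Proof. by rewrite leqNgt; apply/negP => gap4; apply: (@no_hook4 i i (m i - 4)); lia. Qed.

Lemma part_neq_next_add2 i : i.+1 < r -> m i <> m i.+1 + 2.
Proof.
move=> i1_r gap2; have := part_gt_next mu_partition mu_strict i1_r => strict1.
by apply: (@no_hook4 i i.+1 (m i.+1 - 1)); lia.
Qed.

Lemma part_next_step1 i : i.+1 < r -> m i = m i.+1 + 1 -> m i.+1 = m i.+2 + 1.
Proof.
move=> i1_r gap1; have := part_gt_next mu_partition mu_strict i1_r => strict1.
have [le1 | gap2] := leqP (m i.+1) (m i.+2 + 1); first lia.
by exfalso; apply: (@no_hook4 i i.+1 (m i.+1 - 2)); lia.
Qed.

Lemma part_step_3_or_1 i : i.+1 < r -> m i = m i.+1 + 3 \/ m i = m i.+1 + 1.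
Proof.
move=> i1_r; have := part_gt_next mu_partition mu_strict (ltnW i1_r).
by have := part_le_next_add3 i; have := part_neq_next_add2 i1_r; lia.
Qed.

Lemma core_shape : 0 < r -> shape_I mu \/ shape_II mu.
Proof.
move=> r_gt0; have last0 := nth_last_succ r_gt0.
(* s is the first row whose step is 1, or the last row if there is none. *)
pose start1 n := (n < r.-1) && (m n == m n.+1 + 1) || (n == r.-1).
have start1_last : start1 r.-1 by rewrite /start1 eqxx orbT.
have [s start1_s s_min] := ex_minnP (ex_intro start1 r.-1 start1_last).
have s_r1 : s <= r.-1 by apply: s_min.
have steps3 i : i < s -> m i = m i.+1 + 3.
  move=> i_s; have i_r1 : i < r.-1 by lia.
  have : ~~ start1 i by apply/negP => /s_min; lia.
  rewrite /start1 i_r1 /= negb_or => /andP[/eqP not1 _].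
  by case: (@part_step_3_or_1 i) => //; lia.
have last_le3 : m r.-1 <= 3 by have := part_le_next_add3 r.-1; rewrite last0.
have last_gt0 : 0 < m r.-1 by apply: part_gt0 => //; lia.
case: (ltnP s r.-1) => [s_lt_r1 | r1_le_s].
  have start_s : m s = m s.+1 + 1.
    by move: start1_s; rewrite /start1 s_lt_r1 /= => /orP[/eqP // | /eqP]; lia.
  have steps1 i : s <= i -> i < r -> m i = m i.+1 + 1.
    elim: i => [|i IH]; first by rewrite leqn0 => /eqP s0 _; rewrite s0 in start_s.
    rewrite leq_eqVlt => /orP[/eqP <- // | si ir].
    exact: part_next_step1 ir (IH si (ltnW ir)).
  left; split; first by rewrite steps1 ?last0 //; lia.
  by exists s; do 2!split=> //; move=> i si ir1; apply: steps1; lia.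
have [last1 | last_ne1] := eqVneq (m r.-1) 1.
  left; split=> //; exists r.-1; do 2!split=> //; last by lia.
  by move=> i ir1; apply: steps3; lia.
by right; split=> [| i ir1]; [lia | apply: steps3; lia].
Qed.

End ToShape.

Theorem lemma4p2 (mu : seq nat) (Hmu : is_partition mu) (Hr : 0 < size mu) :
  let r := size mu in
  let condI :=
    nth 0 mu r.-1 = 1 /\
    exists s, s <= r.-1 /\
      (forall i, i < s -> nth 0 mu i = nth 0 mu i.+1 + 3) /\
      (forall i, s <= i -> i < r.-1 -> nth 0 mu i = nth 0 mu i.+1 + 1) in
  let condII :=
    (nth 0 mu r.-1 = 2 \/ nth 0 mu r.-1 = 3) /\
    (forall i, i < r.-1 -> nth 0 mu i = nth 0 mu i.+1 + 3) in
  (two_regular mu /\ four_core mu) <->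
  ((condI /\ ~ condII) \/ (~ condI /\ condII)).
Proof.
cbv zeta.
have shapes_xor : shape_I mu \/ shape_II mu <->
    (shape_I mu /\ ~ shape_II mu) \/ (~ shape_I mu /\ shape_II mu).
  by have := @shape_I_not_II mu; tauto.
apply: iff_trans shapes_xor; rewrite two_regular_sorted_gtn //; split.
  by case=> strict core; apply: core_shape.
move=> shape; split; first exact: shape_sorted_gtn.
by case: shape; [apply: shape_I_four_core | apply: shape_II_four_core].
Qed.
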